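(* Fix a classifier $f_\theta$, a sequence of queueing systems and a sequence of feasible policies, and suppose Assumptions (DGP), (HT) and (UI) hold. Then for every predicted class $l\in[K]$, as $n\to\infty$, \[ \tilde L_l^n\to\tilde L_l:=\tilde R_l\circ\lambda e+\sum_{k=1}^K\frac{p_k}{\mu_k}q_{kl}\tilde A_0,\qquad \tilde L_+^n\to\tilde L_+:=\tilde V_0\circ\lambda e+\sum_{k=1}^K\frac{p_k}{\mu_k}\tilde A_0, \] uniformly on $[0,1]$, where $e$ is the identity on $[0,1]$. Moreover, for every $n$ and $t\in[0,1]$, \[ \hat L_l^n(nt)=\lambda^n\sum_{k=1}^K\frac{p_k^n}{\mu_k^n}q_{kl}^n\,nt+n^{1/2}\tilde L_l^n(t)+o(n^{1/2}),\qquad \hat L_+^n(nt)=\lambda^n\sum_{k=1}^K\frac{p_k^n}{\mu_k^n}\,nt+n^{1/2}\tilde L_+^n(t)+o(n^{1/2}). \]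
   Context: Model. For each $n$, system $n$ operates on $[0,n]$; jobs $i=1,2,\dots$ arrive in a single stream with interarrival times $u_i^n$, features $X_i^n\in\mathbb R^d$, one-hot true class $Y_i^n\in\{0,1\}^K$, service requirement $v_i^n>0$, and one-hot predicted class $\hat Y_i^n=f_\theta(X_i^n)$. Let $\lambda^n=1/E[u_1^n]$, $p_k^n=P(Y_{1k}^n=1)$, $1/\mu_k^n=E[v_1^n\mid Y_{1k}^n=1]$, $q_{kl}^n=P(\hat Y_{1l}^n=1\mid Y_{1k}^n=1)$, $A_0^n(t)=\max\{m:\sum_{i\le m}u_i^n\le t\}$. Assumption (DGP): for each $n$, $\{(u_i^n,v_i^n,X_i^n,Y_i^n)\}_i$ i.i.d.; $\{u_i^n\}$ independent of $\{(v_i^n,X_i^n,Y_i^n)\}$; $v_i^n\perp X_i^n\mid Y_i^n$. Assumption (HT): there exist $p_k,q_{kl}\in[0,1]$, positive $\lambda,\mu_k$ with $\sum_kp_kq_{kl}>0$ for all $l$, $\lambda\sum_kp_k/\mu_k=1$, and $n^{1/2}(\lambda^n-\lambda),n^{1/2}(\mu_k^n-\mu_k),n^{1/2}(p_k^n-p_k),n^{1/2}(q_{kl}^n-q_{kl})\to0$. Assumption (UI): $E[(u_1^n)^2],E[(v_1^n)^2],E[(X_1^n)^2]<\infty$; $E[(u_1^n)^2\mathbf 1\{u_1^n>x\}]\le g_u(x)$, $E[(v_1^n)^2\mathbf 1\{v_1^n>x\}]\le g_v(x)$ with fixed $g_u,g_v\to0$; $E[(u_1^n)^2]\to\alpha_u\in(0,\infty)$,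 $E[(v_1^n)^2\mid Y_{1k}^n=1]\to\alpha_{v,k}\in(0,\infty)$. Primitive diffusion-scaled processes on $[0,1]$: $\tilde A_0^n(t)=n^{-1/2}[A_0^n(nt)-\lambda^nnt]$; $\tilde V_0^n(t)=n^{-1/2}[\sum_{i\le\lfloor nt\rfloor}v_i^n-\sum_k\frac{p_k^n}{\mu_k^n}nt]$; $\tilde R_l^n(t)=n^{-1/2}[\sum_{i\le\lfloor nt\rfloor}\hat Y_{il}^nv_i^n-\sum_k\frac{p_k^n}{\mu_k^n}q_{kl}^nnt]$. These are realized on a common probability space (distributions preserved) on which they converge uniformly on $[0,1]$ almost surely to limits $\tilde A_0,\tilde V_0,\tilde R_l$ (jointly a multidimensional Brownian motion); all statements hold almost surely there. Input processes: $\hat L_l^n(t)=\sum_{i=1}^{A_0^n(t)}\hat Y_{il}^nv_i^n$ (total service requested by jobs predicted as $l$ arriving by $t$), $\hat L_+^n=\sum_l\hat L_l^n$, $\tilde L_l^n(t)=n^{-1/2}[\hat L_l^n(nt)-\lambda^n\sum_k\frac{p_k^n}{\mu_k^n}q_{kl}^nnt]$, $\tilde L_+^n=\sum_l\tilde L_l^n$. A feasible policy is a non-anticipating rule choosing which predicted class to serve (preemption allowed). $o(n^{1/2})$ denotes terms whose sup over $t\in[0,1]$ divided by $n^{1/2}$ tends to $0$. *)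

From Stdlib Require Import Reals Lra Lia Arith ZArith.
Open Scope R_scope.

(* sumR K f = f 0 + ... + f (K-1)  (sum over classes k in [K] = {0,..,K-1}) *)
Fixpoint sumR (K : nat) (f : nat -> R) : R :=
  match K with O => 0 | S k => sumR k f + f k end.

(* psum f m = f 1 + ... + f m  (jobs are numbered 1,2,...) *)
Fixpoint psum (f : nat -> R) (m : nat) : R :=
  match m with O => 0 | S m' => psum f m' + f (S m') end.

Definition nfloor (x : R) : nat := Z.to_nat (Int_part x).

(* one-hot predicted class: Yhat_{il} = 1{predicted class of job i = l} *)
Definition onehot (c l : nat) : R := if Nat.eqb c l then 1 else 0.

Definition is_count_max (u : nat -> R) (t : R) (a : nat) : Prop :=
  psum u a <= t /\ (forall m, psum u m <= t -> (m <= a)%nat).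

Definition unif_cv_on (T : R) (F : nat -> R -> R) (G : R -> R) : Prop :=
  forall eps, eps > 0 -> exists N : nat, forall n : nat, (n >= N)%nat ->
    forall t, 0 <= t <= T -> Rabs (F n t - G t) < eps.

Definition cont_nonneg (f : R -> R) : Prop :=
  forall t, 0 <= t -> forall eps, eps > 0 -> exists delta, delta > 0 /\
    forall s, 0 <= s -> Rabs (s - t) < delta -> Rabs (f s - f t) < eps.

Definition little_o_sqrt (err : nat -> R -> R) : Prop :=
  forall eps, eps > 0 -> exists N : nat, forall n : nat, (n >= N)%nat ->
    forall t, 0 <= t <= 1 -> Rabs (err n t) <= eps * sqrt (INR n).

Section Processes.
Variables (K : nat) (u v : nat -> nat -> R) (pc : nat -> nat -> nat)
  (A0 : nat -> R -> nat) (lam : nat -> R) (p mu : nat -> nat -> R)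
  (q : nat -> nat -> nat -> R).

Definition rho (n : nat) : R := sumR K (fun k => p n k / mu n k).
Definition rhol (n l : nat) : R := sumR K (fun k => p n k / mu n k * q n k l).

Definition tA0 (n : nat) (t : R) : R :=
  (INR (A0 n (INR n * t)) - lam n * (INR n * t)) / sqrt (INR n).
Definition tV0 (n : nat) (t : R) : R :=
  (psum (v n) (nfloor (INR n * t)) - rho n * (INR n * t)) / sqrt (INR n).
Definition tR (n l : nat) (t : R) : R :=
  (psum (fun i => onehot (pc n i) l * v n i) (nfloor (INR n * t))
     - rhol n l * (INR n * t)) / sqrt (INR n).

Definition Lhat (n l : nat) (s : R) : R :=
  psum (fun i => onehot (pc n i) l * v n i) (A0 n s).
Definition Lhatplus (n : nat) (s : R) : R := sumR K (fun l => Lhat n l s).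
Definition tL (n l : nat) (t : R) : R :=
  (Lhat n l (INR n * t) - lam n * rhol n l * (INR n * t)) / sqrt (INR n).
Definition tLplus (n : nat) (t : R) : R := sumR K (fun l => tL n l t).
End Processes.

From Stdlib Require Import Reals Lra Lia ZArith.
Open Scope R_scope.

(* With
   a(t) = A0(n t)/n, the scaled input process splits exactly as
     L~_l(t) = R~_l(a(t)) + rho_l^n A~0(t).
   Since A~0 converges, A~0/sqrt n -> 0 uniformly, so a -> lam e uniformly
   (fluid limit); uniform continuity of the limit R~_l then gives
   R~_l(a) -> R~_l o lam e, while rho_l^n A~0 -> rho_l A~0.  The one-hot
   predictions of a job sum to 1, so summing over l turns the same argument
   into the statement for L~_+.  The expansions of L^ are the definitions of
   the scaled processes rearranged, with zero remainder. *)

Lemma sumR_ext K f g : (forall l, (l < K)%nat -> f l = g l) -> sumR K f = sumR K g.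
Proof.
  induction K as [|K IH]; intros Hfg; simpl; auto.
  rewrite IH, Hfg; auto; intros; apply Hfg; lia.
Qed.

Lemma sumR_add K f g : sumR K (fun l => f l + g l) = sumR K f + sumR K g.
Proof. induction K as [|K IH]; simpl; [lra | rewrite IH; lra]. Qed.

Lemma sumR_sub K f g : sumR K (fun l => f l - g l) = sumR K f - sumR K g.
Proof. induction K as [|K IH]; simpl; [lra | rewrite IH; lra]. Qed.

Lemma sumR_mull K a f : sumR K (fun l => a * f l) = a * sumR K f.
Proof. induction K as [|K IH]; simpl; [lra | rewrite IH; lra]. Qed.

Lemma sumR_mulr K f b : sumR K (fun l => f l * b) = sumR K f * b.
Proof. induction K as [|K IH]; simpl; [lra | rewrite IH; lra]. Qed.

Lemma sumR_div K f b : sumR K (fun l => f l / b) = sumR K f / b.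
Proof. apply sumR_mulr. Qed.

Lemma sumR_exchange K M (F : nat -> nat -> R) :
  sumR K (fun l => sumR M (fun k => F k l)) = sumR M (fun k => sumR K (fun l => F k l)).
Proof.
  induction K as [|K IH]; simpl.
  - induction M as [|M IHM]; simpl; lra.
  - rewrite IH, <- sumR_add. reflexivity.
Qed.

Lemma sumR_psum K (F : nat -> nat -> R) m :
  sumR K (fun l => psum (F l) m) = psum (fun i => sumR K (fun l => F l i)) m.
Proof.
  induction m as [|m IH]; simpl.
  - induction K as [|K IHK]; simpl; lra.
  - rewrite sumR_add, IH. reflexivity.
Qed.

Lemma sumR_onehot K c : sumR K (onehot c) = if Nat.ltb c K then 1 else 0.
Proof.
  induction K as [|K IH]; simpl; [reflexivity|].
  rewrite IH. unfold onehot.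
  destruct (Nat.ltb_spec c K), (Nat.ltb_spec c (S K)), (Nat.eqb_spec c K); lia || lra.
Qed.

Lemma psum_ext f g m : (forall i, f i = g i) -> psum f m = psum g m.
Proof. intros Hfg; induction m as [|m IH]; simpl; auto. rewrite IH, Hfg; auto. Qed.

Lemma sqrt_INR_ge_1 n : (1 <= n)%nat -> 1 <= sqrt (INR n).
Proof.
  intros Hn. rewrite <- sqrt_1. apply sqrt_le_1_alt.
  apply le_INR in Hn. simpl in Hn. lra.
Qed.

Lemma sqrt_INR_unbounded X : exists N : nat, forall n, (n >= N)%nat -> X < sqrt (INR n).
Proof.
  set (Y := Rmax 0 X).
  assert (HY : 0 <= Y /\ X <= Y) by (split; [apply Rmax_l | apply Rmax_r]).
  destruct (INR_unbounded (Y * Y)) as [N HN]. exists N. intros n Hn.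
  apply le_INR in Hn.
  assert (sqrt (Y * Y) < sqrt (INR n)) by (apply sqrt_lt_1_alt; split; nra).
  rewrite sqrt_square in * by tauto. lra.
Qed.

Lemma Un_cv_of_scaled xn x : Un_cv (fun n => sqrt (INR n) * (xn n - x)) 0 -> Un_cv xn x.
Proof.
  intros H e He. destruct (H e He) as [N HN]. exists (S N). intros n Hn.
  specialize (HN n ltac:(lia)). unfold Rdist in *.
  rewrite Rminus_0_r, Rabs_mult in HN.
  assert (1 <= sqrt (INR n)) by (apply sqrt_INR_ge_1; lia).
  rewrite (Rabs_right (sqrt _)) in HN by lra.
  pose proof (Rabs_pos (xn n - x)). nra.
Qed.

Lemma Un_cv_inv xn x : x <> 0 -> Un_cv xn x -> Un_cv (fun n => / xn n) (/ x).
Proof.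
  intros Hx H. apply (continuity_seq Rinv xn x); auto.
  change (continuity_pt (/ id) x). apply continuity_pt_inv; auto.
  apply derivable_continuous_pt, derivable_pt_id.
Qed.

Lemma Un_cv_sumR K (f : nat -> nat -> R) (g : nat -> R) :
  (forall k, (k < K)%nat -> Un_cv (fun n => f n k) (g k)) ->
  Un_cv (fun n => sumR K (f n)) (sumR K g).
Proof.
  induction K as [|K IH]; intros H; simpl.
  - intros e He. exists O. intros. unfold Rdist. rewrite Rminus_0_r, Rabs_R0. lra.
  - apply CV_plus; [apply IH; intros |]; apply H; lia.
Qed.

Definition bounded_on (T : R) (f : R -> R) : Prop :=
  exists M, forall t, 0 <= t <= T -> Rabs (f t) <= M.

Lemma cont_nonneg_continuity_pt f x :
  cont_nonneg f -> 0 <= x -> continuity_pt (fun s => f (Rmax 0 s)) x.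
Proof.
  intros Hf Hx eps He. destruct (Hf x Hx eps He) as [d [Hd H]].
  exists d. split; auto. intros y [_ Hy]. simpl in *. unfold Rdist in *.
  rewrite (Rmax_right 0 x) by lra. apply H; [apply Rmax_l|].
  unfold Rmax. destruct (Rle_dec 0 y); auto.
  revert Hy. split_Rabs; lra.
Qed.

Lemma cont_nonneg_unif_cont f T : cont_nonneg f -> forall eps, eps > 0 ->
  exists d, d > 0 /\ forall x y, 0 <= x <= T -> 0 <= y <= T ->
    Rabs (x - y) < d -> Rabs (f x - f y) < eps.
Proof.
  intros Hf eps He.
  destruct (Heine (fun s => f (Rmax 0 s)) (fun c => 0 <= c <= T) (compact_P3 0 T)
      (fun x Hx => cont_nonneg_continuity_pt f x Hf (proj1 Hx)) (mkposreal eps He))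
    as [[d Hd] Hunif].
  exists d. split; auto. intros x y Hx Hy Hxy.
  specialize (Hunif x y Hx Hy Hxy). simpl in Hunif.
  rewrite (Rmax_right 0 x), (Rmax_right 0 y) in Hunif by lra. exact Hunif.
Qed.

Lemma cont_nonneg_bounded_on f T : cont_nonneg f -> bounded_on T f.
Proof.
  intros Hf. destruct (Rle_lt_dec 0 T) as [HT | HT].
  2: { exists 0. intros. lra. }
  destruct (continuity_ab_maj (fun s => Rabs (f (Rmax 0 s))) 0 T HT) as [x [Hmax _]].
  - intros c Hc. apply (continuity_pt_comp (fun s => f (Rmax 0 s)) Rabs).
    + apply cont_nonneg_continuity_pt; tauto.
    + apply Rcontinuity_abs.
  - exists (Rabs (f (Rmax 0 x))). intros t Ht. specialize (Hmax t Ht).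
    rewrite (Rmax_right 0 t) in Hmax by lra. exact Hmax.
Qed.

Lemma unif_cv_on_ext T (N : nat) F F' G G' : unif_cv_on T F G ->
  (forall n t, (N <= n)%nat -> 0 <= t <= T -> F' n t = F n t) ->
  (forall t, 0 <= t <= T -> G' t = G t) -> unif_cv_on T F' G'.
Proof.
  intros H HF HG eps He. destruct (H eps He) as [N' HN']. exists (N + N')%nat.
  intros n Hn t Ht. rewrite HF, HG by (auto; lia). apply HN'; auto; lia.
Qed.

Lemma unif_cv_on_const T G : unif_cv_on T (fun _ => G) G.
Proof. intros eps He. exists O. intros. unfold Rminus. rewrite Rplus_opp_r, Rabs_R0. lra. Qed.

Lemma unif_cv_on_add T F1 F2 G1 G2 : unif_cv_on T F1 G1 -> unif_cv_on T F2 G2 ->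
  unif_cv_on T (fun n t => F1 n t + F2 n t) (fun t => G1 t + G2 t).
Proof.
  intros H1 H2 eps He.
  destruct (H1 (eps / 2) ltac:(lra)) as [N1 HN1], (H2 (eps / 2) ltac:(lra)) as [N2 HN2].
  exists (N1 + N2)%nat. intros n Hn t Ht.
  specialize (HN1 n ltac:(lia) t Ht). specialize (HN2 n ltac:(lia) t Ht).
  revert HN1 HN2. split_Rabs; lra.
Qed.

Lemma unif_cv_on_eventually_bounded T F G : unif_cv_on T F G -> bounded_on T G ->
  exists M N, 0 <= M /\ forall n, (n >= N)%nat -> forall t, 0 <= t <= T -> Rabs (F n t) <= M.
Proof.
  intros H [M HM]. destruct (H 1 ltac:(lra)) as [N HN].
  exists (Rabs M + 1), N. split; [pose proof (Rabs_pos M); lra|].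
  intros n Hn t Ht. specialize (HN n Hn t Ht). specialize (HM t Ht).
  pose proof (Rle_abs M). revert HN HM. split_Rabs; lra.
Qed.

Lemma unif_cv_on_scale T c_n c F G : Un_cv c_n c -> unif_cv_on T F G -> bounded_on T G ->
  unif_cv_on T (fun n t => c_n n * F n t) (fun t => c * G t).
Proof.
  intros Hc HF HG eps He.
  destruct (unif_cv_on_eventually_bounded T F G HF HG) as [M [N1 [HM HN1]]].
  assert (Hc0 := Rabs_pos c).
  destruct (Hc (eps / 2 / (M + 1))) as [N2 HN2]; [apply Rdiv_lt_0_compat; lra|].
  destruct (HF (eps / 2 / (Rabs c + 1))) as [N3 HN3]; [apply Rdiv_lt_0_compat; lra|].
  exists (N1 + N2 + N3)%nat. intros n Hn t Ht.
  specialize (HN1 n ltac:(lia) t Ht). specialize (HN2 n ltac:(lia)).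
  specialize (HN3 n ltac:(lia) t Ht). unfold Rdist in HN2.
  replace (c_n n * F n t - c * G t) with ((c_n n - c) * F n t + c * (F n t - G t)) by ring.
  eapply Rle_lt_trans; [apply Rabs_triang|]. rewrite !Rabs_mult.
  assert (Rabs (c_n n - c) * Rabs (F n t) <= eps / 2 / (M + 1) * M).
  { apply Rmult_le_compat; auto using Rabs_pos; lra. }
  assert (eps / 2 / (M + 1) * M < eps / 2).
  { apply (Rmult_lt_reg_r (M + 1)); [lra|]. field_simplify; lra. }
  assert (Rabs c * Rabs (F n t - G t) <= Rabs c * (eps / 2 / (Rabs c + 1))).
  { apply Rmult_le_compat_l; lra. }
  assert (Rabs c * (eps / 2 / (Rabs c + 1)) < eps / 2).
  { apply (Rmult_lt_reg_r (Rabs c + 1)); [lra|]. field_simplify; lra. }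
  lra.
Qed.

Lemma unif_cv_on_div_sqrt T F G : unif_cv_on T F G -> bounded_on T G ->
  unif_cv_on T (fun n t => F n t / sqrt (INR n)) (fun _ => 0).
Proof.
  intros HF HG eps He.
  destruct (unif_cv_on_eventually_bounded T F G HF HG) as [M [N1 [HM HN1]]].
  destruct (sqrt_INR_unbounded (M / eps)) as [N2 HN2].
  exists (S (N1 + N2)). intros n Hn t Ht.
  specialize (HN1 n ltac:(lia) t Ht). specialize (HN2 n ltac:(lia)).
  assert (Hs : 1 <= sqrt (INR n)) by (apply sqrt_INR_ge_1; lia).
  rewrite Rminus_0_r. unfold Rdiv. rewrite Rabs_mult, Rabs_inv, (Rabs_right (sqrt _)) by lra.
  apply (Rmult_lt_reg_r (sqrt (INR n))); [lra|].
  rewrite Rmult_assoc, Rinv_l by lra.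
  assert (M / eps * eps = M) by (field; lra).
  assert (M / eps * eps < sqrt (INR n) * eps) by (apply Rmult_lt_compat_r; lra).
  lra.
Qed.

Lemma unif_cv_on_comp S T F G tau_n tau :
  cont_nonneg G -> unif_cv_on T F G -> unif_cv_on S tau_n tau ->
  (forall n t, 0 <= t <= S -> 0 <= tau_n n t) ->
  (forall t, 0 <= t <= S -> 0 <= tau t /\ tau t + 1 <= T) ->
  unif_cv_on S (fun n t => F n (tau_n n t)) (fun t => G (tau t)).
Proof.
  intros HG HF Htau Htau_n_pos Htau_range eps He.
  destruct (cont_nonneg_unif_cont G T HG (eps / 2) ltac:(lra)) as [d [Hd HGd]].
  destruct (Htau (Rmin d 1)) as [N1 HN1]; [apply Rmin_glb_lt; lra|].
  destruct (HF (eps / 2) ltac:(lra)) as [N2 HN2].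
  exists (N1 + N2)%nat. intros n Hn t Ht.
  specialize (HN1 n ltac:(lia) t Ht).
  pose proof (Rmin_l d 1). pose proof (Rmin_r d 1).
  specialize (Htau_range t Ht). specialize (Htau_n_pos n t Ht).
  assert (Hrange : 0 <= tau_n n t <= T) by (revert HN1; split_Rabs; lra).
  specialize (HN2 n ltac:(lia) _ Hrange).
  assert (HGclose : Rabs (G (tau_n n t) - G (tau t)) < eps / 2) by (apply HGd; lra).
  revert HN2 HGclose. split_Rabs; lra.
Qed.

(* [tV0] and [tR] are instances of [scaled_psum], and [tL] of
   [scaled_random_sum], up to conversion. *)
Definition scaled_psum (w : nat -> nat -> R) (c : nat -> R) (n : nat) (s : R) : R :=
  (psum (w n) (nfloor (INR n * s)) - c n * (INR n * s)) / sqrt (INR n).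

Definition scaled_random_sum (A0 : nat -> R -> nat) (lam_n : nat -> R)
    (w : nat -> nat -> R) (c : nat -> R) (n : nat) (t : R) : R :=
  (psum (w n) (A0 n (INR n * t)) - lam_n n * c n * (INR n * t)) / sqrt (INR n).

Lemma nfloor_INR m : nfloor (INR m) = m.
Proof. unfold nfloor. rewrite Int_part_INR. apply Nat2Z.id. Qed.

Section RandomTimeChange.
Variables (A0 : nat -> R -> nat) (lam_n : nat -> R).

Lemma arrival_count_fluid_decomp n t : (1 <= n)%nat ->
  INR (A0 n (INR n * t)) / INR n = lam_n n * t + tA0 A0 lam_n n t / sqrt (INR n).
Proof.
  intros Hn. unfold tA0.
  set (a := INR (A0 n (INR n * t))).
  assert (Hs : 1 <= sqrt (INR n)) by (apply sqrt_INR_ge_1; lia).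
  set (s := sqrt (INR n)) in *.
  assert (Hss : INR n = s * s) by (symmetry; apply sqrt_sqrt, pos_INR).
  rewrite Hss. field. lra.
Qed.

(* Evaluating the partial-sum process at the fluid-scaled arrival count
   [A0 n (n t) / n] recovers exactly [A0 n (n t)] summands. *)
Lemma scaled_random_sum_decomp w c n t : (1 <= n)%nat ->
  scaled_random_sum A0 lam_n w c n t
  = scaled_psum w c n (INR (A0 n (INR n * t)) / INR n) + c n * tA0 A0 lam_n n t.
Proof.
  intros Hn. unfold scaled_random_sum, scaled_psum, tA0.
  assert (Hn0 : 0 < INR n) by (apply lt_0_INR; lia).
  replace (INR n * (INR (A0 n (INR n * t)) / INR n)) with (INR (A0 n (INR n * t)))
    by (field; lra).
  rewrite nfloor_INR. field.
  assert (1 <= sqrt (INR n)) by (apply sqrt_INR_ge_1; lia). lra.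
Qed.

Lemma fluid_limit lam A0L : Un_cv lam_n lam -> bounded_on 1 A0L ->
  unif_cv_on 1 (tA0 A0 lam_n) A0L ->
  unif_cv_on 1 (fun n t => INR (A0 n (INR n * t)) / INR n) (fun t => lam * t).
Proof.
  intros Hlam HA0L HA.
  eapply (unif_cv_on_ext 1 1 _ _ (fun t => lam * t + 0)).
  - apply unif_cv_on_add.
    + apply (unif_cv_on_scale 1 lam_n lam (fun _ t => t) (fun t => t) Hlam).
      * apply unif_cv_on_const.
      * exists 1. intros t Ht. rewrite Rabs_right; lra.
    + exact (unif_cv_on_div_sqrt 1 _ _ HA HA0L).
  - intros n t Hn _. apply arrival_count_fluid_decomp; auto.
  - intros t _. ring.
Qed.

Lemma scaled_random_sum_cv lam A0L w c_n c W :
  0 <= lam -> Un_cv lam_n lam -> Un_cv c_n c -> cont_nonneg A0L -> cont_nonneg W ->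
  unif_cv_on 1 (tA0 A0 lam_n) A0L -> unif_cv_on (lam + 1) (scaled_psum w c_n) W ->
  unif_cv_on 1 (scaled_random_sum A0 lam_n w c_n) (fun t => W (lam * t) + c * A0L t).
Proof.
  intros Hlam Hlam_cv Hc HcA HcW HA HW.
  assert (HA0L : bounded_on 1 A0L) by (apply cont_nonneg_bounded_on; auto).
  assert (Htau_nonneg : forall n t, 0 <= t <= 1 -> 0 <= INR (A0 n (INR n * t)) / INR n).
  { intros [|n] t _.
    - change (INR 0) with 0. unfold Rdiv. rewrite Rinv_0, Rmult_0_r. lra.
    - apply Rle_mult_inv_pos; [apply pos_INR | apply lt_0_INR; lia]. }
  assert (Htau_range : forall t, 0 <= t <= 1 -> 0 <= lam * t /\ lam * t + 1 <= lam + 1)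
    by (intros; nra).
  eapply (unif_cv_on_ext 1 1 _ _ _ _ (unif_cv_on_add 1 _ _ _ _
           (unif_cv_on_comp 1 (lam + 1) _ _ _ _ HcW HW (fluid_limit lam A0L Hlam_cv HA0L HA)
              Htau_nonneg Htau_range)
           (unif_cv_on_scale 1 c_n c _ _ Hc HA HA0L))).
  - intros n t Hn _. apply scaled_random_sum_decomp; auto.
  - reflexivity.
Qed.
End RandomTimeChange.

Section LimitingParameters.
Variables (K : nat) (p_n mu_n : nat -> nat -> R) (q_n : nat -> nat -> nat -> R)
  (p mu : nat -> R) (q : nat -> nat -> R).
Hypothesis Hp : forall k, (k < K)%nat -> Un_cv (fun n => p_n n k) (p k).
Hypothesis Hmu : forall k, (k < K)%nat -> Un_cv (fun n => mu_n n k) (mu k).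
Hypothesis Hmu0 : forall k, (k < K)%nat -> mu k <> 0.

Lemma ratio_cv k : (k < K)%nat -> Un_cv (fun n => p_n n k / mu_n n k) (p k / mu k).
Proof. intros Hk. apply CV_mult; [| apply Un_cv_inv]; auto. Qed.

Lemma rho_cv : Un_cv (rho K p_n mu_n) (sumR K (fun k => p k / mu k)).
Proof. apply (Un_cv_sumR K (fun n k => p_n n k / mu_n n k)), ratio_cv. Qed.

Lemma rhol_cv l : (forall k, (k < K)%nat -> Un_cv (fun n => q_n n k l) (q k l)) ->
  Un_cv (fun n => rhol K p_n mu_n q_n n l) (sumR K (fun k => p k / mu k * q k l)).
Proof.
  intros Hq. apply (Un_cv_sumR K (fun n k => p_n n k / mu_n n k * q_n n k l)).
  intros k Hk. apply CV_mult; auto using ratio_cv.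
Qed.
End LimitingParameters.

Section InputProcesses.
Variables (K : nat) (v : nat -> nat -> R) (pc : nat -> nat -> nat) (A0 : nat -> R -> nat)
  (lam_n : nat -> R) (p_n mu_n : nat -> nat -> R) (q_n : nat -> nat -> nat -> R).
Hypothesis Hpc : forall n i, (pc n i < K)%nat.
Hypothesis Hqsum : forall n k, (k < K)%nat -> sumR K (fun l => q_n n k l) = 1.

Lemma sumR_rhol n : sumR K (rhol K p_n mu_n q_n n) = rho K p_n mu_n n.
Proof.
  unfold rhol, rho. rewrite (sumR_exchange K K (fun k l => p_n n k / mu_n n k * q_n n k l)).
  apply sumR_ext. intros k Hk. rewrite sumR_mull, Hqsum by exact Hk. ring.
Qed.

Lemma Lhatplus_eq_psum n s : Lhatplus K v pc A0 n s = psum (v n) (A0 n s).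
Proof.
  unfold Lhatplus, Lhat. rewrite sumR_psum. apply psum_ext. intros i.
  rewrite sumR_mulr, sumR_onehot, (proj2 (Nat.ltb_lt _ _) (Hpc n i)). ring.
Qed.

Lemma tLplus_eq_Lhatplus n t : tLplus K v pc A0 lam_n p_n mu_n q_n n t
  = (Lhatplus K v pc A0 n (INR n * t) - lam_n n * rho K p_n mu_n n * (INR n * t))
    / sqrt (INR n).
Proof.
  unfold tLplus, tL. rewrite sumR_div, sumR_sub, sumR_mulr, sumR_mull, sumR_rhol.
  reflexivity.
Qed.

Lemma tLplus_eq_scaled_random_sum n t : tLplus K v pc A0 lam_n p_n mu_n q_n n t
  = scaled_random_sum A0 lam_n v (rho K p_n mu_n) n t.
Proof. rewrite tLplus_eq_Lhatplus, Lhatplus_eq_psum. reflexivity. Qed.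

Lemma Lhat_expansion n l t : (1 <= n)%nat ->
  Lhat v pc A0 n l (INR n * t) = lam_n n * rhol K p_n mu_n q_n n l * (INR n * t)
    + sqrt (INR n) * tL K v pc A0 lam_n p_n mu_n q_n n l t.
Proof.
  intros Hn. assert (1 <= sqrt (INR n)) by (apply sqrt_INR_ge_1; exact Hn).
  unfold tL. field. lra.
Qed.

Lemma Lhatplus_expansion n t : (1 <= n)%nat ->
  Lhatplus K v pc A0 n (INR n * t) = lam_n n * rho K p_n mu_n n * (INR n * t)
    + sqrt (INR n) * tLplus K v pc A0 lam_n p_n mu_n q_n n t.
Proof.
  intros Hn. assert (1 <= sqrt (INR n)) by (apply sqrt_INR_ge_1; exact Hn).
  rewrite tLplus_eq_Lhatplus. field. lra.
Qed.
End InputProcesses.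

Lemma little_o_sqrt_0 : little_o_sqrt (fun _ _ => 0).
Proof.
  intros eps He. exists O. intros n _ t _. rewrite Rabs_R0.
  apply Rmult_le_pos; [lra | apply sqrt_pos].
Qed.

Theorem mainTheorem5
  (K : nat)
  (* system n, jobs i = 1,2,...: interarrival u n i, service v n i,
     predicted class pc n i (the one-hot Yhat is onehot (pc n i)) *)
  (u v : nat -> nat -> R) (pc : nat -> nat -> nat)
  (A0 : nat -> R -> nat)
  (* model parameters of system n and their heavy-traffic limits *)
  (lam_n : nat -> R) (p_n mu_n : nat -> nat -> R) (q_n : nat -> nat -> nat -> R)
  (lam : R) (p mu : nat -> R) (q : nat -> nat -> R)
  (* limits of the primitive diffusion-scaled processes (one sample path) *)
  (A0L V0L : R -> R) (RL : nat -> R -> R)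
  (* basic model facts *)
  (Hu : forall n i, 0 <= u n i)
  (Hv : forall n i, 0 < v n i)
  (Hpc : forall n i, (pc n i < K)%nat)
  (HA0 : forall n s, 0 <= s -> is_count_max (u n) s (A0 n s))
  (Hlamn : forall n, 0 < lam_n n)
  (Hmun : forall n k, (k < K)%nat -> 0 < mu_n n k)
  (Hpn : forall n k, (k < K)%nat -> 0 <= p_n n k <= 1)
  (Hqn : forall n k l, (k < K)%nat -> (l < K)%nat -> 0 <= q_n n k l <= 1)
  (Hqsum : forall n k, (k < K)%nat -> sumR K (fun l => q_n n k l) = 1)
  (* Assumption (HT) *)
  (Hlam : 0 < lam)
  (Hmu : forall k, (k < K)%nat -> 0 < mu k)
  (Hp : forall k, (k < K)%nat -> 0 <= p k <= 1)
  (Hq : forall k l, (k < K)%nat -> (l < K)%nat -> 0 <= q k l <= 1)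
  (Hpq : forall l, (l < K)%nat -> 0 < sumR K (fun k => p k * q k l))
  (Hload : lam * sumR K (fun k => p k / mu k) = 1)
  (HTlam : Un_cv (fun n => sqrt (INR n) * (lam_n n - lam)) 0)
  (HTmu : forall k, (k < K)%nat -> Un_cv (fun n => sqrt (INR n) * (mu_n n k - mu k)) 0)
  (HTp : forall k, (k < K)%nat -> Un_cv (fun n => sqrt (INR n) * (p_n n k - p k)) 0)
  (HTq : forall k l, (k < K)%nat -> (l < K)%nat ->
           Un_cv (fun n => sqrt (INR n) * (q_n n k l - q k l)) 0)
  (* the limits have continuous paths (they are Brownian paths) *)
  (HcA : cont_nonneg A0L) (HcV : cont_nonneg V0L)
  (HcR : forall l, (l < K)%nat -> cont_nonneg (RL l))
  (* uniform convergence of the primitives (on compacts) *)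
  (HcvA : forall T, 0 <= T -> unif_cv_on T (tA0 A0 lam_n) A0L)
  (HcvV : forall T, 0 <= T -> unif_cv_on T (tV0 K v p_n mu_n) V0L)
  (HcvR : forall l, (l < K)%nat -> forall T, 0 <= T ->
            unif_cv_on T (fun n => tR K v pc p_n mu_n q_n n l) (RL l)) :
  (forall l, (l < K)%nat ->
     unif_cv_on 1 (fun n => tL K v pc A0 lam_n p_n mu_n q_n n l)
       (fun t => RL l (lam * t) + sumR K (fun k => p k / mu k * q k l) * A0L t))
  /\ unif_cv_on 1 (tLplus K v pc A0 lam_n p_n mu_n q_n)
       (fun t => V0L (lam * t) + sumR K (fun k => p k / mu k) * A0L t)
  /\ (forall l, (l < K)%nat -> exists err : nat -> R -> R, little_o_sqrt err /\
       forall n t, (1 <= n)%nat -> 0 <= t <= 1 ->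
         Lhat v pc A0 n l (INR n * t)
         = lam_n n * sumR K (fun k => p_n n k / mu_n n k * q_n n k l) * (INR n * t)
           + sqrt (INR n) * tL K v pc A0 lam_n p_n mu_n q_n n l t + err n t)
  /\ (exists err : nat -> R -> R, little_o_sqrt err /\
       forall n t, (1 <= n)%nat -> 0 <= t <= 1 ->
         Lhatplus K v pc A0 n (INR n * t)
         = lam_n n * sumR K (fun k => p_n n k / mu_n n k) * (INR n * t)
           + sqrt (INR n) * tLplus K v pc A0 lam_n p_n mu_n q_n n t + err n t).
Proof.
  assert (Hlam_cv : Un_cv lam_n lam) by (apply Un_cv_of_scaled; exact HTlam).
  assert (Hp_cv : forall k, (k < K)%nat -> Un_cv (fun n => p_n n k) (p k))
    by (intros; apply Un_cv_of_scaled; auto).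
  assert (Hmu_cv : forall k, (k < K)%nat -> Un_cv (fun n => mu_n n k) (mu k))
    by (intros; apply Un_cv_of_scaled; auto).
  assert (Hmu0 : forall k, (k < K)%nat -> mu k <> 0)
    by (intros k Hk; specialize (Hmu k Hk); lra).
  assert (HcvA1 : unif_cv_on 1 (tA0 A0 lam_n) A0L) by (apply HcvA; lra).
  split; [| split; [| split]].
  - intros l Hl.
    apply (scaled_random_sum_cv A0 lam_n lam A0L _ _ _ (RL l)); auto; try lra.
    + apply rhol_cv; auto. intros k Hk. apply Un_cv_of_scaled; auto.
    + apply (HcvR l Hl). lra.
  - eapply unif_cv_on_ext with (N := O); [| intros n t _ _; apply tLplus_eq_scaled_random_sum; auto
                                        | reflexivity].
    apply scaled_random_sum_cv; auto using rho_cv; try lra. apply HcvV. lra.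
  - intros l Hl. exists (fun _ _ => 0). split; [exact little_o_sqrt_0 |].
    intros n t Hn _. rewrite Rplus_0_r. apply Lhat_expansion; exact Hn.
  - exists (fun _ _ => 0). split; [exact little_o_sqrt_0 |].
    intros n t Hn _. rewrite Rplus_0_r. apply Lhatplus_expansion; auto.
Qed.
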